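(* Let $s\in\{+1,-1\}$ and $N\ge1$. Let $f:H_N\to\mathbb R$ be nonzero with $\sum_{x\in H_N}f(x)\le0$ and $sf(\mathbf 1)\le0$. Then $$\#\{x\in H_N: f(x)<0\}\cdot\#\{S\subseteq[N]: s\widehat f(S)<0\}\ \ge\ 2^{N-4}.$$ In particular, if there are integers $r,k\ge1$ with $f(x)\ge0$ whenever $d_H(x,\mathbf 1)\ge r$ and $s\widehat f(S)\ge0$ whenever $\#S\ge k$, then $$\sum_{n=1}^{r}\binom{N}{n-1}\cdot\sum_{n=1}^{k}\binom{N}{n-1}\ \ge\ 2^{N-4}.$$
   Context: $H_N=\{-1,1\}^N$, $[N]=\{1,\dots,N\}$, $\mathbf 1=(1,\dots,1)$, and $d_H(x,y)=\#\{n\in[N]: x_n\neq y_n\}$ is the Hamming distance. For $S\subseteq[N]$, $\varphi_S(x)=\prod_{i\in S}x_i$ (with $\varphi_\emptyset\equiv1$), and $\widehat f(S)=2^{-N}\sum_{x\in H_N}f(x)\varphi_S(x)$, so that $f=\sum_S\widehat f(S)\varphi_S$. *)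

(* Real numbers are modelled by an arbitrary real closed field R. *)
From HB Require Import structures.
From mathcomp Require Import all_boot all_order all_algebra.
Set Implicit Arguments. Unset Strict Implicit. Unset Printing Implicit Defensive.
Import Order.TTheory GRing.Theory Num.Theory.
Local Open Scope ring_scope.

(* The hypercube H_N = {-1,1}^N, encoded as boolean vectors: x i = true means x_i = +1,
   x i = false means x_i = -1. *)
Definition cube (N : nat) := {ffun 'I_N -> bool}.

Definition sgnb (R : ringType) (b : bool) : R := if b then 1 else -1.

Definition ones (N : nat) : cube N := [ffun => true].

Definition dH (N : nat) (x y : cube N) : nat := #|[set i : 'I_N | x i != y i]|.

Definition walsh (R : ringType) (N : nat) (S : {set 'I_N}) (x : cube N) : R :=
  \prod_(i in S) sgnb R (x i).

Definition fhat (R : fieldType) (N : nat) (f : cube N -> R) (S : {set 'I_N}) : R :=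
  (2 ^+ N)^-1 * \sum_(x : cube N) f x * walsh R S x.

From HB Require Import structures.
From mathcomp Require Import all_boot all_order all_algebra.
From mathcomp Require Import ring lra.
Set Implicit Arguments. Unset Strict Implicit. Unset Printing Implicit Defensive.
Import Order.TTheory GRing.Theory Num.Theory.
Local Open Scope ring_scope.

(* Write |f|_1 and |hat f|_1 for the l^1 norms.  Fourier inversion and
   |phi_S| = 1 give |f(x)| <= |hat f|_1 and |hat f(S)| <= 2^-N |f|_1.  If a
   real family g has nonpositive sum, its negative entries carry at least half
   of its l^1 norm, so |g|_1 <= 2 #{g < 0} max|g|.  Applied to f (whose sum is
   <= 0) and to s hat f (whose sum is s f(1) <= 0), this yields
   |f|_1 <= 2 #A |hat f|_1 and 2^N |hat f|_1 <= 2 #B |f|_1, hence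
   2^N <= 4 #A #B.  The corollary follows because the negativity sets lie in a
   Hamming ball around 1 and among the small sets respectively. *)

Lemma sum_norm_le_card_neg (R : realDomainType) (T : finType) (g : T -> R) (M : R) :
  \sum_x g x <= 0 -> (forall x, `|g x| <= M) ->
  \sum_x `|g x| <= 2 * (#|[set x | g x < 0]|%:R * M).
Proof.
move=> sum_le0 g_le_M.
rewrite (bigID (fun x => g x < 0)) /= in sum_le0.
rewrite (bigID (fun x => g x < 0)) /=.
have sum_pos : \sum_(x | ~~ (g x < 0)) `|g x| = \sum_(x | ~~ (g x < 0)) g x.
  by apply: eq_bigr => x; rewrite -leNgt => /ger0_norm.
have sum_neg : \sum_(x | g x < 0) `|g x| = - \sum_(x | g x < 0) g x.
  by rewrite -sumrN; apply: eq_bigr => x /ltr0_norm.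
have sum_neg_le : \sum_(x | g x < 0) `|g x| <= #|[set x | g x < 0]|%:R * M.
  rewrite (eq_bigl (fun x => x \in [set x | g x < 0])); last by move=> x; rewrite inE.
  by rewrite mulr_natl -sumr_const; apply: ler_sum => x _.
lra.
Qed.

Section Walsh.
Variable R : numFieldType.
Variable N : nat.

Lemma norm_walsh (S : {set 'I_N}) (x : cube N) : `|walsh R S x| = 1.
Proof.
apply: (big_ind (fun y : R => `|y| = 1)) => [|a b na nb|i _].
- by rewrite normr1.
- by rewrite normrM na nb mulr1.
- by rewrite /sgnb; case: (x i); rewrite ?normrN normr1.
Qed.

Lemma walsh_ones (S : {set 'I_N}) : walsh R S (ones N) = 1.
Proof. by rewrite /walsh big1 // => i _; rewrite ffunE. Qed.

Lemma sum_walsh_mul (x y : cube N) :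
  \sum_(S : {set 'I_N}) walsh R S x * walsh R S y = if x == y then 2 ^+ N else 0.
Proof.
rewrite /walsh; under eq_bigr => S _ do rewrite -big_split /=.
(* Expanding prod_i (x_i y_i + 1) over subsets gives the left-hand side. *)
have -> : \sum_(S : {set 'I_N}) \prod_(i in S) (sgnb R (x i) * sgnb R (y i)) =
          \prod_(i : 'I_N) (sgnb R (x i) * sgnb R (y i) + 1).
  rewrite (bigA_distr 1 +%R (fun i => sgnb R (x i) * sgnb R (y i)) (fun _ => 1)).
  apply: eq_bigr => S _; rewrite [LHS]big_mkcond /=.
  by apply: eq_bigr => i _; case: (i \in S).
case: eqP => [<- | /eqP x_neq_y].
  rewrite (eq_bigr (fun _ => 2)) ?prodr_const ?card_ord // => i _.
  by rewrite /sgnb; case: (x i); ring.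
have [i xy_i] : exists i, x i != y i.
  apply/existsP; apply: contraR x_neq_y => /existsPn same.
  by apply/eqP/ffunP => i; apply/eqP; have := same i; rewrite negbK.
rewrite (bigD1 i) //= /sgnb.
by case: (x i) (y i) xy_i => -[] //= _; rewrite ?mulr1 ?mulrN1 addNr mul0r.
Qed.

Lemma fourier_inversion (f : cube N -> R) (y : cube N) :
  f y = \sum_(S : {set 'I_N}) fhat f S * walsh R S y.
Proof.
rewrite /fhat; under eq_bigr => S _ do rewrite -mulrA big_distrl /=.
rewrite -big_distrr /= exchange_big /=.
under eq_bigr => x _ do
  (under eq_bigr => S _ do rewrite -mulrA; rewrite -big_distrr /= sum_walsh_mul).
rewrite (bigD1 y) //= eqxx big1 ?addr0 => [|x /negbTE ->]; last by rewrite mulr0.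
by rewrite mulrC -mulrA mulfV ?mulr1 // expf_neq0 // pnatr_eq0.
Qed.

Lemma sum_fhat (f : cube N -> R) : \sum_(S : {set 'I_N}) fhat f S = f (ones N).
Proof.
by rewrite (fourier_inversion f (ones N)); apply: eq_bigr => S _; rewrite walsh_ones mulr1.
Qed.

Lemma norm_le_sum_norm_fhat (f : cube N -> R) (x : cube N) :
  `|f x| <= \sum_(S : {set 'I_N}) `|fhat f S|.
Proof.
rewrite fourier_inversion; apply: le_trans (ler_norm_sum _ _ _) _.
by apply: ler_sum => S _; rewrite normrM norm_walsh mulr1.
Qed.

Lemma norm_fhat_le (f : cube N -> R) (S : {set 'I_N}) :
  `|fhat f S| <= (2 ^+ N)^-1 * \sum_(x : cube N) `|f x|.
Proof.
have inv_ge0 : 0 <= (2 ^+ N : R)^-1 by rewrite invr_ge0 exprn_ge0.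
rewrite /fhat normrM ger0_norm // ler_wpM2l //.
apply: le_trans (ler_norm_sum _ _ _) _.
by apply: ler_sum => x _; rewrite normrM norm_walsh mulr1.
Qed.

End Walsh.

Lemma uncertainty_card_neg (R : realFieldType) (N : nat) (s : R) (f : cube N -> R) :
  `|s| = 1 -> (exists x : cube N, f x != 0) ->
  \sum_(x : cube N) f x <= 0 -> s * f (ones N) <= 0 ->
  (2 : R) ^+ N <= 4 * (#|[set x : cube N | f x < 0]|%:R *
                 #|[set S : {set 'I_N} | s * fhat f S < 0]|%:R).
Proof.
move=> norm_s [x0 fx0_neq0] sum_f_le0 sf1_le0.
set a : R := #|_|%:R; set b : R := #|_|%:R.
set L := \sum_x `|f x|; set K := \sum_S `|fhat f S|; set P : R := 2 ^+ N.
have P_gt0 : 0 < P by rewrite exprn_gt0.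
have K_gt0 : 0 < K by apply: lt_le_trans (norm_le_sum_norm_fhat f x0); rewrite normr_gt0.
have L_le : L <= 2 * (a * K).
  exact: sum_norm_le_card_neg sum_f_le0 (norm_le_sum_norm_fhat f).
have K_le : K <= 2 * (b * (P^-1 * L)).
  have -> : K = \sum_S `|s * fhat f S| by apply: eq_bigr => S _; rewrite [RHS]normrM norm_s mul1r.
  apply: sum_norm_le_card_neg => [|S]; first by rewrite -mulr_sumr sum_fhat.
  by rewrite normrM norm_s mul1r norm_fhat_le.
have KP_le : K * P <= 2 * b * L.
  have := ler_wpM2r (ltW P_gt0) K_le.
  suff -> : 2 * (b * (P^-1 * L)) * P = 2 * b * L by [].
  by field; rewrite gt_eqF.
have bL_le : 2 * b * L <= 2 * b * (2 * (a * K)) by rewrite ler_wpM2l // mulr_ge0.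
rewrite -(ler_pM2l K_gt0).
have -> : K * (4 * (a * b)) = 2 * b * (2 * (a * K)) by ring.
exact: le_trans KP_le bL_le.
Qed.

Lemma exp2z_sub4_le (R : realFieldType) (N : nat) (a : R) :
  0 <= a -> (2 : R) ^+ N <= 4 * a -> (2 : R) ^ (N%:Z - 4) <= a.
Proof.
move=> a_ge0 le_a.
have : (2 : R) ^ (N%:Z - 4) * 2 ^+ 4 = 2 ^+ N.
  by rewrite -[(2 : R) ^+ 4]/((2 : R) ^ 4%:Z) -expfzDr ?subrK ?pnatr_eq0.
have : (2 : R) ^+ 4 = 16 by rewrite !exprS expr0; ring.
lra.
Qed.

Lemma card_small_sets (N r : nat) :
  #|[set S : {set 'I_N} | (#|S| < r)%N]| = (\sum_(1 <= n < r.+1) 'C(N, n.-1))%N.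
Proof.
elim: r => [|r IH].
  by rewrite big_geq //; apply/eqP; rewrite cards_eq0; apply/eqP/setP => S; rewrite !inE.
rewrite big_nat_recr //= -IH.
have -> : [set S : {set 'I_N} | (#|S| < r.+1)%N] =
          [set S : {set 'I_N} | (#|S| < r)%N] :|: [set S : {set 'I_N} | #|S| == r].
  by apply/setP => S; rewrite !inE ltnS leq_eqVlt orbC.
rewrite cardsU card_draws card_ord.
have -> : [set S : {set 'I_N} | (#|S| < r)%N] :&: [set S : {set 'I_N} | #|S| == r] = set0.
  by apply/setP => S; rewrite !inE; case: eqP => [->|]; rewrite ?ltnn ?andbF.
by rewrite cards0 subn0.
Qed.

Lemma card_ball_ones (N r : nat) :
  (#|[set x : cube N | (dH x (ones N) < r)%N]| <= \sum_(1 <= n < r.+1) 'C(N, n.-1))%N.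
Proof.
rewrite -card_small_sets.
pose minus_coords (x : cube N) := [set i | ~~ x i].
have minus_coords_inj : injective minus_coords.
  move=> x y /setP eq_xy; apply/ffunP => i; have := eq_xy i.
  by rewrite !inE; case: (x i); case: (y i).
rewrite -(card_imset _ minus_coords_inj); apply: subset_leq_card.
apply/subsetP => S /imsetP [x]; rewrite !inE /dH => x_near ->.
suff -> : minus_coords x = [set i | x i != ones N i] by [].
by apply/setP => i; rewrite !inE ffunE; case: (x i).
Qed.

Lemma card_neg_le_card_lt (T : finType) (R : numDomainType) (g : T -> R)
    (size : T -> nat) (r : nat) :
  (forall x, (r <= size x)%N -> 0 <= g x) ->
  (#|[set x | (g x < 0)%R]| <= #|[set x | size x < r]|)%N.
Proof.
move=> g_ge0; apply: subset_leq_card; apply/subsetP => x; rewrite !inE => gx_lt0.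
by rewrite ltnNge; apply: contraTN gx_lt0 => /g_ge0 /le_gtF ->.
Qed.

Theorem mainTheorem17 (R : rcfType) (N : nat) (s : R) (f : cube N -> R) :
  (s = 1 \/ s = -1) ->
  (1 <= N)%N ->
  (exists x : cube N, f x != 0) ->
  \sum_(x : cube N) f x <= 0 ->
  s * f (ones N) <= 0 ->
  ((#|[set x : cube N | f x < 0]|%:R * #|[set S : {set 'I_N} | s * fhat f S < 0]|%:R
     >= (2 : R) ^ (N%:Z - 4))
  /\
  (forall r k : nat, (1 <= r)%N -> (1 <= k)%N ->
     (forall x : cube N, (r <= dH x (ones N))%N -> 0 <= f x) ->
     (forall S : {set 'I_N}, (k <= #|S|)%N -> 0 <= s * fhat f S) ->
     (\sum_(1 <= n < r.+1) 'C(N, n.-1))%:R * (\sum_(1 <= n < k.+1) 'C(N, n.-1))%:R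
       >= (2 : R) ^ (N%:Z - 4))).
Proof.
move=> s_pm1 _ f_neq0 sum_f_le0 sf1_le0.
have norm_s : `|s| = 1 by case: s_pm1 => ->; rewrite ?normrN normr1.
have card_prod_ge := exp2z_sub4_le (mulr_ge0 (ler0n _ _) (ler0n _ _))
  (uncertainty_card_neg norm_s f_neq0 sum_f_le0 sf1_le0).
split=> // r k _ _ f_ge0 sfhat_ge0; apply: le_trans card_prod_ge _.
apply: ler_pM => //; rewrite ler_nat.
  exact: leq_trans (card_neg_le_card_lt f_ge0) (card_ball_ones N r).
by rewrite -card_small_sets (card_neg_le_card_lt sfhat_ge0).
Qed.
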